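(* Let $\varepsilon>0$, $k>0$ and $0<\lambda\le 1$. Then $$\min\Big\{E_\varepsilon[H]:\ H\in H^1(0,\lambda),\ H\ge 0 \text{ a.e.},\ \int_0^\lambda H\,dy=1\Big\}$$ and $$\min\Big\{U_\varepsilon[h]:\ h\in H^2(0,\lambda),\ h'\ge 0\text{ a.e.},\ h(0)=0,\ h(\lambda)=1\Big\}$$ are attained by the homogeneous inverse deformation $h(y)=y/\lambda$, i.e. by the constant inverse stretch $H\equiv 1/\lambda$. The corresponding minimum values are $E_\varepsilon[1/\lambda]=U_\varepsilon[y/\lambda]=\lambda W^*(1/\lambda)=W(\lambda)$.
   Context: Standing assumptions: $W:(0,\infty)\to[0,\infty)$ is continuously differentiable, convex on $(0,1)$, has a single isolated potential well at $F=1$ with $W(1)=0$ (so $W>0$ for $F\neq1$), has a single inflection point at some $F>1$, and has a horizontal asymptote as $F\to+\infty$ (example: $W(F)=(1-F^{-1})^2$). The inverse stored energy is $W^*(H):=H\,W(1/H)$ for $H>0$, extended by $W^*(0):=0$ (its limit as $H\searrow0$); thus $W^*\ge0$ on $[0,\infty)$ with $W^*(0)=W^*(1)=0$ and $W^*>0$ otherwise. For $\varepsilon>0$, $$E_\varepsilon[H]=\int_0^\lambda\Big(\tfrac{\varepsilon^2}{2}(H')^2+W^*(H)\Big)dy,$$ $$U_\varepsilon[h]=\int_0^\lambda\Big(\tfrac{\varepsilon^2}{2}(h'')^2+W^*(h')+\tfrac{k\,h'}{2}(y-\lambda h)^2\Big)dy,$$ where $k>0$ is a constant. *)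

From HB Require Import structures.
From mathcomp Require Import all_boot all_order all_algebra.
From mathcomp Require Import all_classical all_reals all_analysis.
Set Implicit Arguments. Unset Strict Implicit. Unset Printing Implicit Defensive.
Import Order.TTheory GRing.Theory Num.Theory.
Import numFieldNormedType.Exports.
Local Open Scope classical_set_scope.
Local Open Scope ring_scope.

Section Defs.
Variable R : realType.
Local Notation mu := (@lebesgue_measure R).

Definition I0 (lam : R) : set R := `[0, lam].

Definition convex_on (D : set R) (f : R -> R) : Prop :=
  forall a b t, D a -> D b -> 0 <= t <= 1 ->
    f (t * a + (1 - t) * b) <= t * f a + (1 - t) * f b.
Definition concave_on (D : set R) (f : R -> R) : Prop :=
  convex_on D (fun x => - f x).

Definition stored_energy (W : R -> R) : Prop :=
  (forall F, 0 < F -> derivable W F 1) /\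
  (forall F, 0 < F -> {for F, continuous (derive1 W)}) /\
  (forall F, 0 < F -> 0 <= W F) /\
  W 1 = 0 /\ (forall F, 0 < F -> F != 1 -> 0 < W F) /\
  convex_on `]0, 1[ W /\
  (exists F0, 1 < F0 /\ convex_on `]0, F0] W /\ concave_on `[F0, +oo[ W) /\
  (exists L : R, W x @[x --> +oo] --> L).

(* inverse stored energy W*(H) = H W(1/H), W*(0) = 0 (values for H < 0
   are irrelevant: they are only evaluated on null sets) *)
Definition Wstar (W : R -> R) (H : R) : R :=
  if 0 < H then H * W H^-1 else 0.

Definition L2 (lam : R) (g : R -> R) : Prop :=
  measurable_fun (I0 lam) g /\
  (\int[mu]_(x in I0 lam) ((g x) ^+ 2)%:E < +oo)%E.

(* H in H^1(0,lam) with weak derivative dH: dH in L^2 and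
   H(y) = H(0) + int_0^y dH on [0,lam] (absolutely continuous representative) *)
Definition H1 (lam : R) (H dH : R -> R) : Prop :=
  L2 lam dH /\
  forall y, 0 <= y <= lam ->
    (H y)%:E = ((H 0)%:E + \int[mu]_(x in I0 y) (dH x)%:E)%E.

Definition H2 (lam : R) (h dh d2h : R -> R) : Prop :=
  H1 lam dh d2h /\
  forall y, 0 <= y <= lam ->
    (h y)%:E = ((h 0)%:E + \int[mu]_(x in I0 y) (dh x)%:E)%E.

Definition Eeps (W : R -> R) (eps lam : R) (H dH : R -> R) : \bar R :=
  (\int[mu]_(y in I0 lam)
     ((eps ^+ 2 / 2 * (dH y) ^+ 2 + Wstar W (H y))%:E))%E.

Definition Ueps (W : R -> R) (eps k lam : R) (h dh d2h : R -> R) : \bar R :=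
  (\int[mu]_(y in I0 lam)
     ((eps ^+ 2 / 2 * (d2h y) ^+ 2 + Wstar W (dh y)
       + k * dh y / 2 * (y - lam * h y) ^+ 2)%:E))%E.

Definition admissibleE (lam : R) (H dH : R -> R) : Prop :=
  H1 lam H dH /\
  {ae mu, forall y, I0 lam y -> 0 <= H y} /\
  (\int[mu]_(y in I0 lam) (H y)%:E = 1%:E)%E.

Definition admissibleU (lam : R) (h dh d2h : R -> R) : Prop :=
  H2 lam h dh d2h /\
  {ae mu, forall y, I0 lam y -> 0 <= dh y} /\
  h 0 = 0 /\ h lam = 1.

End Defs.

From HB Require Import structures.
From mathcomp Require Import all_boot all_order all_algebra.
From mathcomp Require Import all_classical all_reals all_analysis.
From mathcomp Require Import ring lra measurable_realfun.
From mathcomp Require Import lebesgue_integral_differentiation.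
Set Implicit Arguments. Unset Strict Implicit. Unset Printing Implicit Defensive.
Import Order.TTheory GRing.Theory Num.Theory.
Import numFieldNormedType.Exports.
Local Open Scope classical_set_scope.
Local Open Scope ring_scope.

(* Jensen's inequality through a supporting line.  W is convex on ]0, F0]
   and nonincreasing on ]0, 1], so at lam <= 1 it has a supporting line of
   slope sg <= 0; beyond F0 that line stays below W 1 = 0 <= W.  Evaluating
   it at F = 1/H and multiplying by H > 0 gives the affine minorant
   W*(H) >= W(lam) H + sg (1 - lam H), valid for every real H.  When H has
   integral 1 over [0, lam] the minorant integrates to exactly W(lam), the
   energy of H = 1/lam; the remaining terms of E and U are nonnegative, and
   for U one takes H = h', whose integral is h(lam) - h(0) = 1. *)

Lemma convex_on_slope_le (R : realType) (D : set R) (f : R -> R) x m y :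
  convex_on D f -> D x -> D y -> x < m -> m < y ->
  (f m - f x) / (m - x) <= (f y - f m) / (y - m).
Proof.
move=> cf Dx Dy xm my.
have xy : x < y := lt_trans xm my.
have yx0 : y - x != 0 by rewrite subr_eq0 gt_eqF.
set t := (y - m) / (y - x).
have ht : t * (y - x) = y - m by rewrite /t mulrVK // unitfE.
have t01 : 0 <= t <= 1.
  apply/andP; split; first by apply: divr_ge0; rewrite subr_ge0 ltW.
  by rewrite /t ler_pdivrMr ?subr_gt0 // mul1r; lra.
have mE : t * x + (1 - t) * y = m.
  apply: (mulIf yx0); transitivity ((t * (y - x)) * (x - y) + y * (y - x)); first ring.
  by rewrite ht; ring.
have := cf x y t Dx Dy t01; rewrite mE => chord.
have cross : f m * (y - x) <= (y - m) * f x + (m - x) * f y.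
  have -> : (y - m) * f x + (m - x) * f y = (t * f x + (1 - t) * f y) * (y - x).
    transitivity ((t * (y - x)) * (f x - f y) + f y * (y - x)); first by rewrite ht; ring.
    ring.
  by rewrite ler_pM2r ?subr_gt0.
rewrite ler_pdivrMr ?subr_gt0 // mulrAC ler_pdivlMr ?subr_gt0 //; nra.
Qed.

(* The slope is the supremum of the left chord slopes at [x]: unlike an
   arbitrary subgradient, it inherits every upper bound of those slopes. *)
Lemma convex_on_support_line (R : realType) (f : R -> R) (b x c : R) :
  convex_on `]0, b] f -> 0 < x <= b ->
  (forall y, 0 < y < x -> (f x - f y) / (x - y) <= c) ->
  exists2 sg, sg <= c & forall F, 0 < F <= b -> f x + sg * (F - x) <= f F.
Proof.
move=> cf /andP[x0 xb] slope_le_c.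
pose S := [set (f x - f y) / (x - y) | y in `]0, x[].
have S0 : S !=set0.
  by exists ((f x - f (x / 2)) / (x - x / 2)), (x / 2); rewrite //= in_itv /=; lra.
have S_le_c : ubound S c by move=> _ [y /= + <-]; rewrite in_itv /=; exact: slope_le_c.
exists (sup S); first exact: ge_sup.
move=> F /andP[F0 Fb].
have [Fx|xF|->] := ltgtP F x; last by rewrite subrr mulr0 addr0.
- have : (f x - f F) / (x - F) <= sup S.
    by apply: ub_le_sup; [exists c | exists F; rewrite //= in_itv /= F0 Fx].
  by rewrite ler_pdivrMr ?subr_gt0 // => ?; nra.
- have : sup S <= (f F - f x) / (F - x).
    apply: ge_sup => // _ [y /= + <-]; rewrite in_itv /= => /andP[y0 yx].
    by apply: (convex_on_slope_le cf _ _ yx xF); rewrite /= in_itv /=; apply/andP; split; lra.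
  by rewrite ler_pdivlMr ?subr_gt0 // => ?; nra.
Qed.

Section stored_energy.
Variables (R : realType) (W : R -> R).

Lemma mul_Wstar_inv (lam : R) : 0 < lam -> lam * Wstar W lam^-1 = W lam.
Proof.
by move=> l0; rewrite /Wstar invr_gt0 l0 invrK mulrA mulfV ?mul1r ?lt0r_neq0.
Qed.

Lemma measurable_Wstar : {in `]0, +oo[, continuous W} ->
  measurable_fun setT (Wstar W).
Proof.
move=> cW.
have pos : setT `&` (fun x : R => 0 < x) @^-1` [set true] = `]0, +oo[%classic.
  by apply/seteqP; split => x /=; rewrite in_itv /= andbT //; case.
apply: measurable_fun_if => //.
- by apply: (measurable_fun_bool true); rewrite pos; exact: measurable_itv.
- rewrite pos; apply: open_continuous_measurable_fun; first exact: interval_open.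
  move=> x; rewrite inE /= in_itv /= andbT => x0.
  apply: cvgM; first exact: cvg_id.
  apply: continuous_comp; first exact: inv_continuous (lt0r_neq0 x0).
  by apply: cW; rewrite in_itv /= andbT invr_gt0.
Qed.

Hypothesis sW : stored_energy W.

Lemma stored_energy_continuous : {in `]0, +oo[, continuous W}.
Proof.
case: sW => dW _ F; rewrite in_itv /= andbT => F0.
exact/differentiable_continuous/derivable1_diffP/dW.
Qed.

Lemma stored_energy_ge0 F : 0 < F -> 0 <= W F.
Proof. by case: sW => _ [_ [W0 _]]; exact: W0. Qed.

Lemma Wstar_ge0 x : 0 <= Wstar W x.
Proof.
rewrite /Wstar; case: ifPn => // x0.
by apply: mulr_ge0; [exact: ltW | apply: stored_energy_ge0; rewrite invr_gt0].
Qed.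

Lemma stored_energy_nonincreasing y x : 0 < y -> y < x -> x <= 1 -> W x <= W y.
Proof.
case: sW => _ [_ [_ [W1 [_ [_ [[F0 [F01 [cW _]]] _]]]]]] y0 yx x1.
have [->|x_neq1] := eqVneq x 1; first by rewrite W1 stored_energy_ge0.
have x_lt1 : x < 1 by rewrite lt_neqAle x_neq1.
have D z : 0 < z <= 1 -> `]0, F0]%classic z by rewrite /= in_itv /= => /andP[-> ?]; lra.
have Dy : `]0, F0]%classic y by apply: D; apply/andP; split; lra.
have := convex_on_slope_le cW Dy (D 1 ltac:(by rewrite ltr01 lexx)) yx x_lt1.
rewrite W1 sub0r mulNr => slope.
have : (W x - W y) / (x - y) <= 0.
  apply: (le_trans slope); rewrite oppr_le0 divr_ge0 ?subr_ge0 //.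
  exact: stored_energy_ge0 (lt_trans y0 yx).
by rewrite ler_pdivrMr ?subr_gt0 // mul0r subr_le0.
Qed.

Lemma stored_energy_support_line lam : 0 < lam <= 1 ->
  exists2 sg, sg <= 0 & forall F, 0 < F -> W lam + sg * (F - lam) <= W F.
Proof.
move=> /andP[l0 l1].
have [_ [_ [_ [W1 [_ [_ [[F0 [F01 [cW _]]] _]]]]]]] := sW.
have in_dom z : 0 < z <= 1 -> 0 < z <= F0 by case/andP=> -> ?; lra.
have left_slopes_le0 y : 0 < y < lam -> (W lam - W y) / (lam - y) <= 0.
  case/andP=> y0 yl; rewrite ler_pdivrMr ?subr_gt0 // mul0r subr_le0.
  exact: stored_energy_nonincreasing.
have [sg sg0 support] :=
  convex_on_support_line cW (in_dom lam ltac:(by rewrite l0)) left_slopes_le0.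
exists sg => // F F0'.
have [FF0|F0F] := leP F F0; first by apply: support; rewrite F0'.
(* past [F0] the line lies below its value at [1], hence below [W 1 = 0] *)
have := support 1 (in_dom 1 ltac:(by rewrite ltr01 lexx)).
have := stored_energy_ge0 F0'; rewrite W1; nra.
Qed.

Lemma Wstar_affine_minorant lam : 0 < lam <= 1 ->
  exists sg, forall x, W lam * x + sg * (1 - lam * x) <= Wstar W x.
Proof.
move=> l01; have [sg sg0 support] := stored_energy_support_line l01.
have /andP[l0 _] := l01.
exists sg => x; rewrite /Wstar; case: ifPn => [x0|].
  have -> : W lam * x + sg * (1 - lam * x) = x * (W lam + sg * (x^-1 - lam)).
    by field; rewrite gt_eqF.
  by rewrite ler_pM2l // support // invr_gt0.
rewrite -leNgt => x0.
have := mulr_ge0_le0 (stored_energy_ge0 l0) x0.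
have : 0 <= lam * - x by apply: mulr_ge0; [exact: ltW | rewrite oppr_ge0].
nra.
Qed.

End stored_energy.

Section integrable_lower_bound.
Context d (T : measurableType d) (R : realType) (mu : {measure set T -> \bar R}).
Variables (D : set T) (mD : measurable D).

Lemma ae_le_integral_ge0 (g f : T -> R) :
  mu.-integrable D (EFin \o g) -> measurable_fun D f ->
  {ae mu, forall x, D x -> g x <= f x} -> {ae mu, forall x, D x -> 0 <= f x} ->
  (\int[mu]_(x in D) (g x)%:E <= \int[mu]_(x in D) (f x)%:E)%E.
Proof.
move=> ig mf gf f0.
have mg : measurable_fun D (EFin \o g) by case/integrableP: ig.
have mEf : measurable_fun D (EFin \o f) by exact/measurable_EFinP.
rewrite integralE.
apply: (@le_trans _ _ (\int[mu]_(x in D) (EFin \o g)^\+ x)%E).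
  by rewrite geeDl // oppe_le0 integral_ge0 // => x _; exact: funeneg_ge0.
rewrite (@ae_eq_integral _ _ _ mu D ((EFin \o f)^\+)%E (EFin \o f)) //.
- apply: ae_ge0_le_integral => //; [exact: measurable_funepos..|].
  apply: (filterS _ gf) => x gfx Dx; rewrite !funeposE /=.
  by rewrite ge_max !le_max !lee_fin gfx // lexx !orbT.
- exact: measurable_funepos.
- apply: (filterS _ f0) => x f0x Dx.
  by rewrite funeposE /= max_l // lee_fin f0x.
Qed.

End integrable_lower_bound.

Section lebesgue_I0.
Variable R : realType.
Local Notation mu := (@lebesgue_measure R).
Implicit Types (lam c : R) (g H dH : R -> R).

Lemma measurable_I0 lam : measurable (I0 lam).
Proof. exact: measurable_itv. Qed.

Lemma lebesgue_measure_I0 lam : 0 <= lam -> mu (I0 lam) = lam%:E.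
Proof.
move=> l0; rewrite /I0 lebesgue_measure_itv /= lte_fin.
case: ifPn => [_|]; first by rewrite sube0.
by rewrite -leNgt => la; congr EFin; apply/eqP; rewrite eq_le la l0.
Qed.

Lemma integral_cst_I0 lam c : 0 <= lam ->
  (\int[mu]_(x in I0 lam) c%:E = (c * lam)%:E)%E.
Proof.
move=> l0; rewrite integral_cst; last exact: measurable_I0.
by have := lebesgue_measure_I0 l0; rewrite /= => ->; rewrite -EFinM.
Qed.

Lemma integrable_cst_I0 lam c : mu.-integrable (I0 lam) (fun _ => c%:E).
Proof.
apply: continuous_compact_integrable; first exact: segment_compact.
by apply: continuous_subspaceT => x; exact: cvg_cst.
Qed.

Lemma L2_integrable lam g : 0 <= lam -> L2 lam g -> mu.-integrable (I0 lam) (EFin \o g).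
Proof.
move=> l0 [mg sq_fin]; have mI := measurable_I0 lam.
apply/integrableP; split; first exact/measurable_EFinP.
have mg2 : measurable_fun (I0 lam) (fun x => (g x ^+ 2)%:E).
  by apply/measurable_EFinP; exact: measurable_funX.
apply: (@le_lt_trans _ _ (\int[mu]_(x in I0 lam) (1%:E + (g x ^+ 2)%:E))%E).
  apply: ge0_le_integral => //.
  - by apply: measurableT_comp => //; exact/measurable_EFinP.
  - by apply: emeasurable_funD => //; exact: measurable_cst.
  - move=> x _; rewrite /= -EFinD lee_fin.
    by case: (leP 0 (g x)) => [/ger0_norm|/ltr0_norm] ->; nra.
rewrite ge0_integralD //; last by move=> x _; rewrite lee_fin sqr_ge0.
by rewrite integral_cst_I0 // lte_add_pinfty // ltry.
Qed.

Lemma integrable_primitive_I0 lam H dH : 0 <= lam ->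
  mu.-integrable (I0 lam) (EFin \o dH) ->
  (forall y, 0 <= y <= lam ->
    (H y)%:E = ((H 0)%:E + \int[mu]_(x in I0 y) (dH x)%:E)%E) ->
  mu.-integrable (I0 lam) (EFin \o H).
Proof.
move=> l0 idH primH.
pose F y := parameterized_integral mu 0 y dH.
apply: (@eq_integrable _ _ _ mu _ (measurable_I0 lam) (fun y => (H 0)%:E + (F y)%:E)%E).
  move=> y; rewrite inE /I0 /= in_itv /= => yl.
  have := primH y yl; rewrite /F /parameterized_integral /Rintegral -/(I0 y).
  by case: (\int[mu]_(x in I0 y) (dH x)%:E)%E.
apply: integrableD; [exact: measurable_I0 | exact: integrable_cst_I0 |].
apply: continuous_compact_integrable; first exact: segment_compact.
exact: parameterized_integral_continuous.
Qed.

Lemma H1_integrable lam H dH : 0 <= lam -> H1 lam H dH ->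
  mu.-integrable (I0 lam) (EFin \o H).
Proof.
by move=> l0 [dH_L2 primH]; apply: integrable_primitive_I0 (L2_integrable l0 dH_L2) primH.
Qed.

Lemma H1_cst lam c : H1 lam (fun _ => c) (fun _ => 0).
Proof.
split; last by move=> y _; rewrite integral0 adde0.
split; first exact: measurable_cst.
by rewrite expr0n /= integral0 ltry.
Qed.

Lemma admissibleE_cst lam : 0 < lam -> admissibleE lam (fun _ => lam^-1) (fun _ => 0).
Proof.
move=> l0; split; first exact: H1_cst.
split; first by apply: aeW => y _; rewrite invr_ge0 ltW.
by rewrite integral_cst_I0 ?(ltW l0) // mulVf ?lt0r_neq0.
Qed.

Lemma admissibleU_hom lam : 0 < lam ->
  admissibleU lam (fun y => y / lam) (fun _ => lam^-1) (fun _ => 0).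
Proof.
move=> l0; split.
  split; first exact: H1_cst.
  by move=> y /andP[y0 _]; rewrite integral_cst_I0 // mul0r add0e mulrC.
split; first by apply: aeW => y _; rewrite invr_ge0 ltW.
by rewrite mul0r divff ?lt0r_neq0.
Qed.

End lebesgue_I0.

Section energy_values.
Variables (R : realType) (W : R -> R) (eps : R).

Lemma Eeps_cst lam c : 0 <= lam ->
  Eeps W eps lam (fun _ => c) (fun _ => 0) = (lam * Wstar W c)%:E.
Proof.
move=> l0; rewrite /Eeps (eq_integral (fun _ => (Wstar W c)%:E)).
  by rewrite integral_cst_I0 // mulrC.
by move=> y _; rewrite expr0n mulr0 add0r.
Qed.

Lemma Ueps_hom k lam : 0 < lam ->
  Ueps W eps k lam (fun y => y / lam) (fun _ => lam^-1) (fun _ => 0) =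
  (lam * Wstar W lam^-1)%:E.
Proof.
move=> l0; rewrite /Ueps (eq_integral (fun _ => (Wstar W lam^-1)%:E)).
  by rewrite integral_cst_I0 ?(ltW l0) // mulrC.
move=> y _; rewrite [lam * _]mulrC divfK ?lt0r_neq0 // subrr.
by rewrite !expr0n /= !mulr0 add0r addr0.
Qed.

End energy_values.

Section energy_lower_bounds.
Variables (R : realType) (W : R -> R).
Hypothesis sW : stored_energy W.
Local Notation mu := (@lebesgue_measure R).

(* The library's [Filter (almost_everywhere _)] hint does not fire for the
   Lebesgue measure. *)
#[local] Instance lebesgue_ae_filter : Filter (almost_everywhere mu) :=
  ae_filter_ringOfSetsType mu.

Lemma W_le_integral_ge_Wstar (lam : R) H f : 0 < lam <= 1 ->
  mu.-integrable (I0 lam) (EFin \o H) ->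
  (\int[mu]_(y in I0 lam) (H y)%:E = 1%:E)%E ->
  measurable_fun (I0 lam) f ->
  {ae mu, forall y, I0 lam y -> Wstar W (H y) <= f y} ->
  ((W lam)%:E <= \int[mu]_(y in I0 lam) (f y)%:E)%E.
Proof.
move=> l01 iH intH1 mf Wstar_le_f; have /andP[l0 _] := l01.
have [sg minorant] := Wstar_affine_minorant sW l01.
pose a := W lam - sg * lam.
have iZ : mu.-integrable (I0 lam) (fun y => a%:E * (EFin \o H) y)%E.
  by apply: integrableZl iH; exact: measurable_I0.
have iC := integrable_cst_I0 lam sg.
have affineE : {in I0 lam, (fun y => a%:E * (EFin \o H) y + sg%:E)%E =1
    EFin \o (fun y => a * H y + sg)}.
  by move=> y _; rewrite /= -EFinM -EFinD.
have i_aff : mu.-integrable (I0 lam) (EFin \o (fun y => a * H y + sg)).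
  apply: (@eq_integrable _ _ _ mu _ (measurable_I0 lam) _ _ affineE).
  by apply: integrableD iZ iC; exact: measurable_I0.
have int_aff : (\int[mu]_(y in I0 lam) (a * H y + sg)%:E = (W lam)%:E)%E.
  rewrite (eq_integral (fun y => a%:E * (EFin \o H) y + sg%:E)%E); last first.
    by move=> y _; rewrite /= -EFinM -EFinD.
  rewrite integralD //; last exact: measurable_I0.
  rewrite integralZl // ?intH1 ?integral_cst_I0 ?(ltW l0) //; last exact: measurable_I0.
  by rewrite -EFinM -EFinD mulr1 /a; congr EFin; ring.
rewrite -int_aff; apply: (ae_le_integral_ge0 _ i_aff mf); first exact: measurable_I0.
- apply: (filterS _ Wstar_le_f) => y Wf Dy; apply: le_trans (Wf Dy).
  apply: le_trans (minorant (H y)); rewrite /a; lra.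
- apply: (filterS _ Wstar_le_f) => y Wf Dy; apply: le_trans (Wf Dy).
  exact: Wstar_ge0.
Qed.

Lemma W_le_Eeps (eps lam : R) H dH : 0 < lam <= 1 -> admissibleE lam H dH ->
  ((W lam)%:E <= Eeps W eps lam H dH)%E.
Proof.
move=> l01 [H1H [_ intH1]]; have /andP[l0 _] := l01.
have iH := H1_integrable (ltW l0) H1H.
have mH : measurable_fun (I0 lam) H by case/integrableP: iH => /measurable_EFinP.
have mdH : measurable_fun (I0 lam) dH by case: H1H => [[]].
apply: W_le_integral_ge_Wstar iH intH1 _ _ => //.
- apply: measurable_funD; first exact/measurable_funM/measurable_funX.
  by apply: measurableT_comp mH; exact: measurable_Wstar (stored_energy_continuous sW).
- by apply: aeW => y _; rewrite lerDr mulr_ge0 ?divr_ge0 ?sqr_ge0.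
Qed.

Lemma W_le_Ueps (eps k lam : R) h dh d2h : 0 <= k -> 0 < lam <= 1 ->
  admissibleU lam h dh d2h -> ((W lam)%:E <= Ueps W eps k lam h dh d2h)%E.
Proof.
move=> k0 l01 [[H1dh primh] [dh_ge0 [h0 hlam]]]; have /andP[l0 _] := l01.
have idh := H1_integrable (ltW l0) H1dh.
have ih := integrable_primitive_I0 (ltW l0) idh primh.
have intdh1 : (\int[mu]_(y in I0 lam) (dh y)%:E = 1%:E)%E.
  by have := primh lam; rewrite lexx (ltW l0) h0 hlam add0e => /(_ isT) <-.
have mh : measurable_fun (I0 lam) h by case/integrableP: ih => /measurable_EFinP.
have mdh : measurable_fun (I0 lam) dh by case/integrableP: idh => /measurable_EFinP.
have md2h : measurable_fun (I0 lam) d2h by case: H1dh => [[]].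
apply: W_le_integral_ge_Wstar idh intdh1 _ _ => //.
- apply: measurable_funD; first apply: measurable_funD.
  + exact/measurable_funM/measurable_funX.
  + by apply: measurableT_comp mdh; exact: measurable_Wstar (stored_energy_continuous sW).
  + apply: measurable_funM; first exact/measurable_funM/measurable_cst/measurable_funM.
    exact/measurable_funX/measurable_funB/measurable_funM.
- apply: (filterS _ dh_ge0) => y dh0 Dy; have := dh0 Dy => {}dh0.
  have : 0 <= eps ^+ 2 / 2 * d2h y ^+ 2 by rewrite mulr_ge0 ?divr_ge0 ?sqr_ge0.
  have : 0 <= k * dh y / 2 * (y - lam * h y) ^+ 2.
    by rewrite mulr_ge0 ?sqr_ge0 // divr_ge0 // mulr_ge0.
  lra.
Qed.

End energy_lower_bounds.

Theorem proposition1 (R : realType) (W : R -> R) (eps k lam : R) :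
  stored_energy W -> 0 < eps -> 0 < k -> 0 < lam -> lam <= 1 ->
  (* the constant inverse stretch H = 1/lam is admissible and minimizes E *)
  admissibleE lam (fun _ => lam^-1) (fun _ => 0) /\
  (forall H dH, admissibleE lam H dH ->
     (Eeps W eps lam (fun _ => lam^-1)%R (fun _ => 0%R) <= Eeps W eps lam H dH)%E) /\
  (* the homogeneous deformation h(y) = y/lam is admissible and minimizes U *)
  admissibleU lam (fun y => y / lam) (fun _ => lam^-1) (fun _ => 0) /\
  (forall h dh d2h, admissibleU lam h dh d2h ->
     (Ueps W eps k lam (fun y => y / lam)%R (fun _ => lam^-1)%R (fun _ => 0%R)
        <= Ueps W eps k lam h dh d2h)%E) /\
  (* minimum values *)
  Eeps W eps lam (fun _ => lam^-1) (fun _ => 0) = (lam * Wstar W lam^-1)%:E /\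
  Ueps W eps k lam (fun y => y / lam) (fun _ => lam^-1) (fun _ => 0)
    = (lam * Wstar W lam^-1)%:E /\
  lam * Wstar W lam^-1 = W lam.
Proof.
move=> sW _ k0 l0 l1; have l01 : 0 < lam <= 1 by rewrite l0 l1.
split; first exact: admissibleE_cst.
split.
  move=> H dH admH; rewrite Eeps_cst ?(ltW l0) // mul_Wstar_inv //.
  exact (W_le_Eeps sW eps l01 admH).
split; first exact: admissibleU_hom.
split.
  move=> h dh d2h admh; rewrite Ueps_hom // mul_Wstar_inv //.
  exact (W_le_Ueps sW eps (ltW k0) l01 admh).
split; first by rewrite Eeps_cst ?(ltW l0).
split; first by rewrite Ueps_hom.
exact: mul_Wstar_inv.
Qed.
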